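(* Let $q$ be an odd positive integer and $m$ a positive integer. If $P_m$ divides $Q_q$, then $m\leq q$ and $m\mid q\cdot 2^{q-1}$.
   Context: $Q_q$ denotes the $q$-dimensional hypercube graph (vertices are $q$-tuples of $0$'s and $1$'s, adjacent iff they differ in exactly one coordinate). $P_m$ denotes the path with $m$ edges. For graphs $H$ and $G$, ''$H$ divides $G$'' means there is a collection of subgraphs $H_i$ of $G$, each isomorphic to $H$, such that $E(G)$ is the disjoint union of the edge sets $E(H_i)$. *)

From mathcomp Require Import all_boot.
Set Implicit Arguments. Unset Strict Implicit. Unset Printing Implicit Defensive.

(* A simple graph is a finite vertex type T with an adjacency relation e
   (assumed symmetric and irreflexive where relevant). Edges are unordered
   pairs, represented as 2-element sets {x, y}. *)
Definition graph_edges (T : finType) (e : rel T) : {set {set T}} :=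
  [set [set x; y] | x in T, y in T & e x y].

Definition cube (q : nat) : finType := {ffun 'I_q -> bool}.
Definition cube_adj (q : nat) : rel (cube q) :=
  fun x y => #|[set i : 'I_q | x i != y i]| == 1.
Arguments cube_adj q : clear implicits.

(* A subgraph of G isomorphic to P_m (the path with m edges) is given by an
   injective sequence of m+1 vertices v_0,...,v_m with consecutive vertices
   adjacent in G; its edge set is { {v_i, v_(i+1)} | i < m }. *)
Definition is_path_in (T : finType) (e : rel T) (m : nat)
    (p : {ffun 'I_m.+1 -> T}) : Prop :=
  injective p /\
  forall i : 'I_m, e (p (widen_ord (leqnSn m) i)) (p (lift ord0 i)).

Definition path_edges (T : finType) (m : nat) (p : {ffun 'I_m.+1 -> T})
    : {set {set T}} :=
  [set [set p (widen_ord (leqnSn m) i); p (lift ord0 i)] | i : 'I_m].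

(* "P_m divides G": E(G) is the disjoint union of the edge sets of a family of
   subgraphs of G each isomorphic to P_m. *)
Definition path_divides (m : nat) (T : finType) (e : rel T) : Prop :=
  exists (k : nat) (P : 'I_k -> {ffun 'I_m.+1 -> T}),
    (forall j, is_path_in e (P j)) /\
    (forall j1 j2, j1 != j2 -> [disjoint path_edges (P j1) & path_edges (P j2)]) /\
    \bigcup_(j < k) path_edges (P j) = graph_edges e.

From mathcomp Require Import all_boot.
From mathcomp Require Import zify.
Set Implicit Arguments. Unset Strict Implicit. Unset Printing Implicit Defensive.

(* Counting the edges of Q_q twice gives k * m = |E(Q_q)| = q 2^(q-1) for a
   decomposition into k paths of length m, whence m divides q 2^(q-1).  A
   vertex that is interior to a path meets it in an even number of edges, so
   every vertex of odd degree q is an end of some path; as k paths have 2k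
   ends, 2^q <= 2k, and k m = q 2^(q-1) <= q k gives m <= q. *)

Definition degree (T : finType) (E : {set {set T}}) (v : T) : nat :=
  #|[set f in E | v \in f]|.

Lemma card_sum_mem (T : finType) (A : {set T}) : #|A| = \sum_x (x \in A : nat).
Proof. by rewrite -sum1_card big_mkcond. Qed.

Lemma odd_sum_exists (I : finType) (F : I -> nat) :
  odd (\sum_i F i) -> exists i, odd (F i).
Proof.
move=> odd_sum; apply/existsP; apply: contraLR odd_sum => /existsPn even_F.
by apply: (big_ind (fun n => ~~ odd n)) => // x y /negbTE ex /negbTE ey;
  rewrite oddD ex ey.
Qed.

Lemma card_setI_bigcup_disjoint (T : finType) k (S : 'I_k -> {set T})
    (B : {set T}) :
  (forall j1 j2, j1 != j2 -> [disjoint S j1 & S j2]) ->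
  #|B :&: \bigcup_(j < k) S j| = \sum_(j < k) #|S j :&: B|.
Proof.
move=> disjS; rewrite card_sum_mem.
rewrite (eq_bigr (fun j => \sum_x (x \in S j :&: B : nat))) => [|j _]; last first.
  exact: card_sum_mem.
rewrite exchange_big /=; apply: eq_bigr => x _.
rewrite inE; have [xB|/negbTE xNB] /= := boolP (x \in B); last first.
  by rewrite big1 // => j _; rewrite inE xNB andbF.
have [/bigcupP [j0 _ x_j0]|x_nS] /= := boolP (x \in \bigcup_(j < k) S j).
  rewrite (bigD1 j0) //= inE x_j0 xB big1 // => j /disjS.
  by rewrite disjoint_sym inE => /disjointFr ->.
rewrite big1 // => j _; rewrite inE xB andbT.
by case: (boolP (x \in S j)) => // x_Sj; case/negP: x_nS; apply/bigcupP; exists j.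
Qed.

Lemma handshake (T : finType) (E : {set {set T}}) :
  (forall f, f \in E -> #|f| = 2) -> \sum_v degree E v = 2 * #|E|.
Proof.
move=> card_f; under eq_bigr => v _ do rewrite /degree card_sum_mem.
rewrite exchange_big /= -sum1_card big_distrr /= [RHS]big_mkcond /=.
apply: eq_bigr => f _; have [fE|fNE] := boolP (f \in E).
  by rewrite muln1 -(card_f f fE) card_sum_mem; apply: eq_bigr => v _; rewrite inE fE.
by rewrite big1 // => v _; rewrite inE (negbTE fNE).
Qed.

Section PathEdges.
Variables (T : finType) (m : nat) (p : {ffun 'I_m.+1 -> T}).
Hypothesis p_inj : injective p.

Let edge (i : 'I_m) : {set T} := [set p (widen_ord (leqnSn m) i); p (lift ord0 i)].

Lemma edge_ends_neq i : p (widen_ord (leqnSn m) i) != p (lift ord0 i).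
Proof. by apply/negP => /eqP /p_inj /(congr1 val) /=; rewrite /bump leq0n; lia. Qed.

Lemma edge_inj : injective edge.
Proof.
move=> i j /setP edge_ij; apply/val_inj.
have := edge_ij (p (widen_ord (leqnSn m) i)).
have := edge_ij (p (lift ord0 i)).
rewrite !inE !eqxx orbT /= => /esym/orP h2 /esym/orP h1.
by case: h1 h2 => /eqP /p_inj /(congr1 val) /= h1 [] /eqP /p_inj /(congr1 val) /=;
  move: h1; rewrite /bump !leq0n /=; lia.
Qed.

Lemma card_path_edges : #|path_edges p| = m.
Proof. by rewrite card_imset ?card_ord //; apply: edge_inj. Qed.

Lemma path_edges_at (v : T) :
  #|path_edges p :&: [set f : {set T} | v \in f]| =
  \sum_(i < m) (v == p (widen_ord (leqnSn m) i)) +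
  \sum_(i < m) (v == p (lift ord0 i)).
Proof.
have -> : path_edges p :&: [set f : {set T} | v \in f] = edge @: [set i | v \in edge i].
  apply/setP => f; apply/setIP/imsetP => [[/imsetP [i _ ->] vi] | [i]].
    by exists i => //; rewrite !inE in vi *.
  by rewrite inE => vi ->; split; [apply/imsetP; exists i | rewrite inE].
rewrite card_imset; last exact: edge_inj.
rewrite -big_split /= card_sum_mem; apply: eq_bigr => i _.
rewrite !inE; have := edge_ends_neq i.
case: (v =P p (widen_ord (leqnSn m) i)) => [-> /negbTE -> //| _ _].
by case: eqP.
Qed.

(* Each vertex of the path is counted twice by the edges, except the two
   ends, which are counted once. *)
Lemma odd_path_edges_at_end (v : T) :
  odd #|path_edges p :&: [set f : {set T} | v \in f]| -> v = p ord0 \/ v = p ord_max.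
Proof.
rewrite path_edges_at => odd_deg.
have parity : \sum_(i < m) (v == p (widen_ord (leqnSn m) i)) +
              \sum_(i < m) (v == p (lift ord0 i)) +
              ((v == p ord0) + (v == p ord_max)) =
              (\sum_(t < m.+1) (v == p t)).*2.
  by rewrite -addnn {1}big_ord_recr big_ord_recl /=; lia.
move: (congr1 odd parity); rewrite oddD odd_double odd_deg => /negbFE.
by case: eqP => [->|_]; case: eqP => [->|_]; auto.
Qed.

End PathEdges.

Section PathDecomposition.
Variables (T : finType) (e : rel T) (m k : nat) (P : 'I_k -> {ffun 'I_m.+1 -> T}).
Hypothesis P_path : forall j, is_path_in e (P j).
Hypothesis P_disjoint :
  forall j1 j2, j1 != j2 -> [disjoint path_edges (P j1) & path_edges (P j2)].
Hypothesis P_cover : \bigcup_(j < k) path_edges (P j) = graph_edges e.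

Lemma card_graph_edges_decomposition : #|graph_edges e| = k * m.
Proof.
rewrite -P_cover -[\bigcup_(j < k) _]setTI card_setI_bigcup_disjoint //.
rewrite (eq_bigr (fun _ => m)) ?sum_nat_const ?card_ord // => j _.
by rewrite setIT card_path_edges //; case: (P_path j).
Qed.

Lemma odd_degree_path_end (v : T) :
  odd (degree (graph_edges e) v) ->
  exists j (b : bool), v = P j (if b then ord_max else ord0).
Proof.
have -> : degree (graph_edges e) v =
          #|[set f : {set T} | v \in f] :&: \bigcup_(j < k) path_edges (P j)|.
  by rewrite P_cover /degree; apply: eq_card => f; rewrite !inE andbC.
rewrite card_setI_bigcup_disjoint // => /odd_sum_exists [j].
case/odd_path_edges_at_end => [|->|->]; first by case: (P_path j).
  by exists j, false.
by exists j, true.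
Qed.

Lemma card_le_double_num_paths :
  (forall v, odd (degree (graph_edges e) v)) -> #|T| <= k.*2.
Proof.
move=> odd_deg.
pose end_of (jb : 'I_k * bool) := P jb.1 (if jb.2 then ord_max else ord0).
rewrite -cardsT -muln2 -(card_ord k) -card_bool -card_prod -cardsT.
apply: leq_trans (leq_imset_card end_of _); apply: subset_leq_card.
apply/subsetP => v _; have [j [b ->]] := odd_degree_path_end (odd_deg v).
by apply/imsetP; exists (j, b).
Qed.

End PathDecomposition.

Definition flip q (v : cube q) (i : 'I_q) : cube q :=
  [ffun j => if j == i then ~~ v j else v j].

Lemma flip_neq q (v : cube q) i : flip v i != v.
Proof. by apply/eqP => /ffunP /(_ i); rewrite ffunE eqxx; case: (v i). Qed.

Lemma cube_adj_flip q (v : cube q) i : cube_adj q v (flip v i).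
Proof.
apply/cards1P; exists i; apply/setP => j.
by rewrite !inE ffunE; case: (j == i); case: (v j).
Qed.

Lemma cube_adj_sym q : symmetric (cube_adj q).
Proof.
by move=> x y; rewrite /cube_adj; congr (_ == _); apply: eq_card => j; rewrite !inE eq_sym.
Qed.

Lemma cube_adjP q (v u : cube q) : cube_adj q v u -> exists i, u = flip v i.
Proof.
move=> /cards1P [i /setP diff_i]; exists i; apply/ffunP => j.
move: (diff_i j); rewrite !inE ffunE.
by case: (j =P i) => [->|_]; case: (v _); case: (u _).
Qed.

Lemma cube_adj_neq q (x y : cube q) : cube_adj q x y -> x != y.
Proof. by move=> /cube_adjP [i ->]; rewrite eq_sym flip_neq. Qed.

Lemma card_cube_edge q f : f \in graph_edges (cube_adj q) -> #|f| = 2.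
Proof.
by case/imset2P => x y _; rewrite inE => /cube_adj_neq xy ->; rewrite cards2 xy.
Qed.

Lemma cube_degree q (v : cube q) : degree (graph_edges (cube_adj q)) v = q.
Proof.
rewrite /degree.
have -> : [set f in graph_edges (cube_adj q) | v \in f] =
          [set [set v; flip v i] | i : 'I_q].
  apply/setP => f; apply/idP/idP.
    rewrite inE => /andP [/imset2P [x y _]]; rewrite inE => xy ->.
    rewrite !inE => /orP [/eqP vx | /eqP vy]; subst.
      by have [i ->] := cube_adjP xy; apply/imsetP; exists i.
    rewrite cube_adj_sym in xy; have [i ->] := cube_adjP xy.
    by apply/imsetP; exists i; rewrite // setUC.
  case/imsetP => i _ ->; rewrite !inE eqxx andbT.
  by apply/imset2P; exists v (flip v i); rewrite // inE cube_adj_flip.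
rewrite card_imset ?card_ord // => i j /setP /(_ (flip v i)).
rewrite !inE eqxx orbT (negbTE (flip_neq v i)) => /esym/eqP/ffunP/(_ i).
by rewrite !ffunE eqxx; case: (i =P j) => // _; case: (v i).
Qed.

Lemma card_cube q : #|cube q| = 2 ^ q.
Proof. by rewrite card_ffun card_bool card_ord. Qed.

Lemma card_cube_edges q : 2 * #|graph_edges (cube_adj q)| = q * 2 ^ q.
Proof.
rewrite -handshake; last exact: card_cube_edge.
under eq_bigr => v _ do rewrite cube_degree.
by rewrite sum_nat_const card_cube mulnC.
Qed.

Theorem theorem4 (q m : nat) :
  odd q -> 0 < m -> path_divides m (cube_adj q) ->
  m <= q /\ m %| q * 2 ^ (q - 1).
Proof.
move=> odd_q _ [k [P [P_path [P_disjoint P_cover]]]].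
have edges_k := card_graph_edges_decomposition P_path P_disjoint P_cover.
have ends_k : 2 ^ q <= k.*2.
  rewrite -card_cube; apply: card_le_double_num_paths P_path P_disjoint P_cover _.
  by move=> v; rewrite cube_degree.
have edges_q := card_cube_edges q; rewrite edges_k in edges_q.
have pow_q : 2 ^ q = 2 * 2 ^ (q - 1) by rewrite -expnS subn1 prednK // odd_gt0.
rewrite pow_q in edges_q ends_k.
have t_pos : 0 < 2 ^ (q - 1) by rewrite expn_gt0.
have km : k * m = q * 2 ^ (q - 1) by lia.
by split; [nia | rewrite -km dvdn_mull].
Qed.
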